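(* Let $G$ be a graph with finite edge set $E(G)$, and let $x$ be fixed. Suppose $p(F,x)$, $F\subseteq E(G)$, are numbers for which there exist a finite measure space $(\Omega,\mathscr{A},\mu)$ and measurable sets $\{A_e\}_{e\in E(G)}$ with $\mu\big(\bigcap_{e\in F}A_e\big)=p(F,x)$ for every $F\subseteq E(G)$ (the empty intersection being $\Omega$), and let $$P(G,x)=\sum_{F\subseteq E(G)}(-1)^{|F|}p(F,x).$$ Call a pair $\{B,\{b\}\}$ with $B\subseteq E(G)$ and $b\in E(G)\setminus B$ a broken pair of $P(G,x)$ if $p(B,x)=p(B\cup\{b\},x)$. Let $\{B_1,B^*_1\},\dots,\{B_k,B^*_k\}$ be broken pairs of $P(G,x)$ (so each $B^*_i=\{b_i\}$ is a single edge not in $B_i$ with $p(B_i,x)=p(B_i\cup\{b_i\},x)$). For $i\in\{1,\dots,k\}$ put $$\mathscr{B}_i=\{F\subseteq E(G):\ F\supseteq B_i,\ \text{and } F\not\supseteq B_j\setminus B^*_i \text{ for every } j<i\},$$ and $\mathscr{B}=\mathscr{B}_1\cup\cdots\cup\mathscr{B}_k$. Then $$P(G,x)=\sum_{F\in 2^{E(G)}\setminus\mathscr{B}}(-1)^{|F|}p(F,x).$$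
   Context: $2^{E(G)}$ denotes the power set of $E(G)$. In the paper, a graph polynomial written in inclusion–exclusion form $P(G,x)=\sum_{F\subseteq E(G)}(-1)^{|F|}p(F,x)$ is interpreted by setting $\mu(\bigcap_{e\in F}A_e)=p(F,x)$; this representation is part of the hypotheses here. *)

From HB Require Import structures.
From mathcomp Require Import all_boot all_order all_algebra.
From mathcomp Require Import all_classical all_reals all_analysis.
Set Implicit Arguments. Unset Strict Implicit. Unset Printing Implicit Defensive.
Import Order.TTheory GRing.Theory Num.Theory.

(* The edge set E(G) is the finite type E; subsets F of E(G) are {set E}. *)

Definition incl_excl_poly (R : ringType) (E : finType) (X : Type)
  (p : {set E} -> X -> R) (x : X) : R :=
  (\sum_(F : {set E}) (-1) ^+ #|F| * p F x)%R.

Definition broken_pair (R : ringType) (E : finType) (X : Type)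
  (p : {set E} -> X -> R) (x : X) (B : {set E}) (b : E) : Prop :=
  b \notin B /\ p B x = p (b |: B) x.

Definition scriptB_i (E : finType) (k : nat) (B : 'I_k -> {set E}) (b : 'I_k -> E)
  (i : 'I_k) : {set {set E}} :=
  [set F : {set E} | (B i \subset F) &&
     [forall j : 'I_k, (j < i)%N ==> ~~ (B j :\ b i \subset F)]].

Definition scriptB (E : finType) (k : nat) (B : 'I_k -> {set E}) (b : 'I_k -> E)
  : {set {set E}} := \bigcup_(i : 'I_k) scriptB_i B b i.

From HB Require Import structures.
From mathcomp Require Import all_boot all_order all_algebra.
From mathcomp Require Import all_classical all_reals all_analysis.
Set Implicit Arguments.
Unset Strict Implicit.
Unset Printing Implicit Defensive.
Import Order.TTheory GRing.Theory Num.Theory.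
Local Open Scope ring_scope.

(* Write I(F) for the intersection of the A_e, e in F.  If {B, {b}} is broken,
   then I(B) \ A_b is a null set; it contains I(F) \ A_b for every F ⊇ B, so
   p(F ∪ {b}) = p(F) for all such F.  Hence toggling b_i is a sign-reversing
   involution of 𝓑_i that preserves p, and the terms over 𝓑_i cancel.  The
   𝓑_i are pairwise disjoint: a member of 𝓑_j contains no B_i \ {b_j} with
   i < j, whereas every member of 𝓑_i contains B_i.  So the terms over 𝓑
   sum to zero. *)

Section BrokenPairMeasure.
Local Open Scope classical_set_scope.
Context (R : realFieldType) (E : finType) (X : Type) (p : {set E} -> X -> R).
Context (x : X) (d : measure_display) (T : algebraOfSetsType d).
Context (mu : {content set T -> \bar R}) (A : E -> set T).
Hypothesis mA : forall e, measurable (A e).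
Hypothesis mu_bigcap : forall F : {set E},
  mu (\bigcap_(e in [set e | e \in F]) A e) = (p F x)%:E.

Let I (F : {set E}) := \bigcap_(e in [set e | e \in F]) A e.

Let measurable_I F : measurable (I F).
Proof. by apply: fin_bigcap_measurable => [|e _]; [exact: finite_finset|]. Qed.

Let I_setU1 b F : I (b |: F) = A b `&` I F.
Proof.
rewrite /I -bigcap_setU1; congr bigcap; apply/seteqP; split=> e /=.
  by rewrite in_setU1 => /orP[/eqP ->|]; [left|right].
by rewrite in_setU1 => -[->|->]; rewrite ?eqxx ?orbT.
Qed.

Let mu_I_setD_setU1 b F : mu (I F `\` A b) + (p (b |: F) x)%:E = (p F x)%:E.
Proof. by rewrite -!mu_bigcap -/(I _) I_setU1 setIC -measureDI. Qed.

Lemma broken_pair_setU1 (B F : {set E}) (b : E) :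
  broken_pair p x B b -> B \subset F -> p (b |: F) x = p F x.
Proof.
move=> [_ pBb] BF.
have nullB : mu (I B `\` A b) = 0%E.
  have := mu_I_setD_setU1 b B; rewrite -pBb.
  by move/(congr1 (fun z => z - (p B x)%:E)%E); rewrite addeK // subee.
have nullF : mu (I F `\` A b) = 0%E.
  apply: subset_measure0 nullB; do ?exact: measurableD.
  by apply: setSD => t IFt e /= eB; apply: IFt; rewrite /= (fintype.subsetP BF).
by have := mu_I_setD_setU1 b F; rewrite nullF add0e => -[].
Qed.

End BrokenPairMeasure.

Lemma sum_sign_reversing_involution (R : numDomainType) (I : finType)
    (S : {pred I}) (t : I -> I) (f : I -> R) :
  involutive t -> {homo t : i / i \in S} -> {in S, forall i, f (t i) = - f i} ->
  \sum_(i in S) f i = 0.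
Proof.
move=> tK tS ft.
have sum_opp : \sum_(i in S) f i = - \sum_(i in S) f i.
  rewrite {1}(reindex_inj (inv_inj tK)) -sumrN /=.
  rewrite (eq_bigl [in S]) => [|i]; last by apply/idP/idP => /tS //; rewrite tK.
  by apply: eq_bigr => i /ft ->.
have /eqP : (\sum_(i in S) f i) *+ 2 = 0 by rewrite mulr2n {2}sum_opp subrr.
by rewrite mulrn_eq0 => /eqP.
Qed.

Section Toggle.
Context (E : finType) (b : E).

Definition toggle (F : {set E}) : {set E} := if b \in F then F :\ b else b |: F.

Lemma toggleK : involutive toggle.
Proof.
move=> F; rewrite /toggle; case bF: (b \in F).
  by rewrite finset.setD11 finset.setD1K.
by rewrite finset.setU11 finset.setU1K ?bF.
Qed.

Lemma subset_toggle (C F : {set E}) :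
  b \notin C -> (C \subset toggle F) = (C \subset F).
Proof.
move=> bC; rewrite /toggle; case: ifP => bF.
  by rewrite finset.subsetD1 bC andbT.
by rewrite -{2}(finset.setU1K (negbT bF)) finset.subsetD1 bC andbT.
Qed.

Lemma sign_card_toggle (R : pzRingType) (F : {set E}) :
  (-1) ^+ #|toggle F| = - (-1) ^+ #|F| :> R.
Proof.
rewrite /toggle; case: ifP => bF; last by rewrite cardsU1 bF exprS mulN1r.
by rewrite [in RHS](cardsD1 b F) bF exprS mulN1r opprK.
Qed.

Lemma toggle_invariant (T : Type) (q : {set E} -> T) (B F : {set E}) :
  b \notin B -> (forall G : {set E}, B \subset G -> q (b |: G) = q G) ->
  B \subset F -> q (toggle F) = q F.
Proof.
move=> bB q_setU1 BF; rewrite /toggle; case: ifP => bF; last exact: q_setU1.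
by rewrite -{2}(finset.setD1K bF) q_setU1 // finset.subsetD1 BF.
Qed.

End Toggle.

Section BrokenPairFamily.
Context (E : finType) (k : nat) (B : 'I_k -> {set E}) (b : 'I_k -> E).

Lemma disjoint_scriptB_i (i j : 'I_k) :
  (i < j)%N -> [disjoint scriptB_i B b i & scriptB_i B b j].
Proof.
move=> ij; apply/pred0P => F /=; rewrite !inE.
apply/negP => /and3P[/andP[BiF _] _ /forallP/(_ i)].
by rewrite ij (fintype.subset_trans (finset.subD1set _ _) BiF).
Qed.

Lemma trivIset_scriptB_i : finset.trivIset [set scriptB_i B b i | i : 'I_k].
Proof.
apply/finset.trivIsetP => _ _ /imsetP[i _ ->] /imsetP[j _ ->] neq_ij.
have [ij|ji|ij] := ltngtP i j; first exact: disjoint_scriptB_i.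
  by rewrite disjoint_sym disjoint_scriptB_i.
by rewrite (val_inj ij) eqxx in neq_ij.
Qed.

Lemma cover_scriptB_i :
  finset.cover [set scriptB_i B b i | i : 'I_k] = scriptB B b.
Proof. by rewrite cover_imset; apply: eq_bigl => i; rewrite inE. Qed.

Hypothesis b_notin_B : forall i, b i \notin B i.

Lemma toggle_scriptB_i (i : 'I_k) (F : {set E}) :
  (toggle (b i) F \in scriptB_i B b i) = (F \in scriptB_i B b i).
Proof.
rewrite !inE subset_toggle //; congr (_ && _); apply: eq_forallb => j.
by rewrite subset_toggle // finset.setD11.
Qed.

End BrokenPairFamily.

Section BrokenPairSum.
Context (R : numDomainType) (E : finType) (X : Type) (p : {set E} -> X -> R).
Context (x : X) (k : nat) (B : 'I_k -> {set E}) (b : 'I_k -> E).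
Hypothesis broken : forall i, broken_pair p x (B i) (b i).
Hypothesis p_setU1 : forall i (F : {set E}),
  B i \subset F -> p (b i |: F) x = p F x.

Let b_notin_B i : b i \notin B i. Proof. by case: (broken i). Qed.

Lemma sum_scriptB_i_eq0 (i : 'I_k) :
  \sum_(F in scriptB_i B b i) (-1) ^+ #|F| * p F x = 0.
Proof.
apply: (sum_sign_reversing_involution (toggleK (b i))) => F.
  by rewrite toggle_scriptB_i.
rewrite inE => /andP[BiF _].
have p_toggle := toggle_invariant (q := p ^~ x) (b_notin_B i) (@p_setU1 i) BiF.
by rewrite sign_card_toggle p_toggle mulNr.
Qed.

Lemma sum_scriptB_eq0 : \sum_(F in scriptB B b) (-1) ^+ #|F| * p F x = 0.
Proof.
rewrite -cover_scriptB_i finset.big_trivIset ?trivIset_scriptB_i //.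
by rewrite big1 // => _ /imsetP[i _ ->]; exact: sum_scriptB_i_eq0.
Qed.

End BrokenPairSum.

Local Open Scope classical_set_scope.

Theorem corollary1 (R : realType) (E : finType) (X : Type)
  (p : {set E} -> X -> R) (x : X)
  (d : measure_display) (T : measurableType d)
  (mu : {finite_measure set T -> \bar R}) (A : E -> set T)
  (hA : forall e, measurable (A e))
  (hmu : forall F : {set E},
     mu (\bigcap_(e in [set e | e \in F]) A e) = (p F x)%:E)
  (k : nat) (B : 'I_k -> {set E}) (b : 'I_k -> E)
  (hbroken : forall i, broken_pair p x (B i) (b i)) :
  incl_excl_poly p x =
  \sum_(F : {set E} | F \notin scriptB B b) (-1) ^+ #|F| * p F x.
Proof.
have p_setU1 i (F : {set E}) : B i \subset F -> p (b i |: F) x = p F x.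
  exact: (broken_pair_setU1 hA hmu (hbroken i)).
by rewrite /incl_excl_poly (bigID [in scriptB B b]) /= sum_scriptB_eq0 ?add0r.
Qed.
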